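(* Let $(Z,\delta)$ be a compact metric space and for $n\ge1$ let $X_n,Y_n$ be compact subsets of $Z$ with $X_n\cup Y_n\to Z_\infty$ in the $\delta$-Hausdorff metric. Assume that $X_n\cup Y_n$ (with the induced metric) is a geodesic space for every $n$. If $Z_\infty$ is 2-connected and $\mathrm{diam}(X_n\cap Y_n)\to0$, then $\min(\mathrm{diam}(X_n),\mathrm{diam}(Y_n))\to0$.
   Context: A compact metric space $(X,d)$ is geodesic if any two points $x,y$ are joined by an isometry $p:[0,d(x,y)]\to X$ with $p(0)=x$, $p(d(x,y))=y$. A metric space $X$ is 2-connected if $X\setminus\{x_0\}$ is connected for every $x_0\in X$. *)

From HB Require Import structures.
From mathcomp Require Import all_boot all_order all_algebra.
From mathcomp Require Import all_classical all_reals all_analysis.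
Set Implicit Arguments. Unset Strict Implicit. Unset Printing Implicit Defensive.
Import Order.TTheory GRing.Theory Num.Theory.
Local Open Scope classical_set_scope.
Local Open Scope ring_scope.

Section defs.
Context {R : realType} {Z : metricType R}.

Definition geodesic_set (S : set Z) : Prop :=
  forall x y, S x -> S y ->
    exists p : R -> Z,
      [/\ p 0 = x, p (mdist x y) = y,
          (forall t, 0 <= t <= mdist x y -> S (p t)) &
          (forall s t, 0 <= s <= mdist x y -> 0 <= t <= mdist x y ->
             mdist (p s) (p t) = `|s - t|)].

Definition two_connected (A : set Z) : Prop :=
  forall x0, A x0 -> connected (A `\ x0).

Definition hausdorff_dist (A B : set Z) : \bar R :=
  maxe (ereal_sup [set ereal_inf [set (mdist a b)%:E | b in B] | a in A])
       (ereal_sup [set ereal_inf [set (mdist a b)%:E | a in A] | b in B]).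

(* Diameter, with the convention diam set0 = 0. *)
Definition diam (A : set Z) : \bar R :=
  ereal_sup ([set (mdist p.1 p.2)%:E | p in A `*` A] `|` [set 0%E]).

End defs.

(* Suppose both diameters exceed e > 0 infinitely often. A geodesic of
   X_n ∪ Y_n from X_n to Y_n meets X_n ∩ Y_n no later than it reaches Y_n, so
   there are a_n ∈ X_n and b_n ∈ Y_n at distance > e/2 from some
   c_n ∈ X_n ∩ Y_n; by compactness these accumulate at a, b, c ∈ Z_∞ with
   a, b ≠ c. Since Z_∞ \ {c} is connected, a and b are joined by a finite chain
   of hops z → w with 4 d(z,w) < d(c,w). For n large X_n ∪ Y_n is δ-dense in
   Z_∞ and X_n ∩ Y_n lies within 2δ of c, so a point of X_n near a can only
   follow the chain inside X_n: switching to Y_n would force a geodesic through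
   X_n ∩ Y_n and bring the current hop within 10δ of c. Hence b is δ-close to
   both X_n and Y_n, and the same crossing argument puts b within 5δ of c,
   which fails for δ small. *)

From HB Require Import structures.
From mathcomp Require Import all_boot all_order all_algebra.
From mathcomp Require Import all_classical all_reals all_analysis.
From mathcomp Require Import lra.
From Stdlib Require Import Relation_Operators.

Set Implicit Arguments.
Unset Strict Implicit.
Unset Printing Implicit Defensive.
Import Order.TTheory GRing.Theory Num.Theory numFieldNormedType.Exports.
Local Open Scope classical_set_scope.
Local Open Scope ring_scope.

Lemma connected_chain {T : topologicalType} (U : set T) (P : T -> T -> Prop) a :
  connected U -> U a -> (forall z, U z -> \forall w \near z, P z w /\ P w z) ->
  forall b, U b -> clos_refl_trans_n1 T (fun z w => U w /\ P z w) a b.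
Proof.
move=> cU Ua nbhsP.
pose step z w := U w /\ P z w.
pose N z := [set w | P z w /\ P w z].
pose A := [set z | U z /\ clos_refl_trans_n1 T step a z].
have NzE z : U z -> (N z)° z by move=> /nbhsP.
suff AU : A = U by move=> b Ub; have [] : A b by rewrite AU.
apply: cU.
- by exists a; split => //; exact: rtn1_refl.
- exists (\bigcup_(z in A) (N z)°); first by apply: bigcup_open => z _; exact: open_interior.
  apply/seteqP; split=> [z [Uz az]|w [Uw [z [_ az] /interior_subset [Pzw _]]]].
    by split => //; exists z => //; exact: NzE.
  by split => //; apply: rtn1_trans az.
- exists (~` \bigcup_(z in U `\` A) (N z)°).
    by rewrite closedC; apply: bigcup_open => z _; exact: open_interior.
  apply/seteqP; split=> [z [Uz az]|z [Uz notN]].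
    split => // -[w [Uw notAw] /interior_subset [_ Pzw]].
    by apply: notAw; split => //; apply: rtn1_trans az.
  split => //; apply: contrapT => notaz; apply: notN.
  by exists z; [split => // -[] | exact: NzE].
Qed.

Section metric.
Context {R : realType} {Z : metricType R}.
Local Notation d := (@mdist R Z).
Implicit Types (A K X Y : set Z) (a b c w x y z : Z).

Definition near_set (δ : R) A z := exists2 w, A w & d z w < δ.

Lemma closed_near_set A z : closed A -> (forall δ, 0 < δ -> near_set δ A z) -> A z.
Proof.
move=> clA Anear; apply: clA => B /nbhs_ballP [δ /= δ0 sB].
have [w Aw dzw] := Anear δ δ0; exists w; split => //; apply: sB.
by rewrite ballEmdist.
Qed.

Definition crossing X Y :=
  forall x y, X x -> Y y -> exists2 w, (X `&` Y) w & d x w <= d x y.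

Lemma geodesic_crossing X Y :
  geodesic_set (X `|` Y) -> closed X -> closed Y -> crossing X Y.
Proof.
move=> geo clX clY x y Xx Yy.
have [p [p0 pL pXY pd]] := geo x y (or_introl Xx) (or_intror Yy).
set L := d x y in pL pXY pd *.
have L0 : 0 <= L by exact: mdist_ge0.
pose S := [set t | 0 <= t <= L /\ X (p t)].
have S0 : S 0 by split; [rewrite lexx L0 | rewrite p0].
have supS : has_sup S by split; [exists 0 | exists L => t [/andP[]]].
set s := sup S.
have s0 : 0 <= s by exact: sup_upper_bound.
have sL : s <= L by apply: ge_sup; [exists 0 | move=> t [/andP[]]].
have sI : 0 <= s <= L by rewrite s0 sL.
have Xps : X (p s).
  apply: closed_near_set => // e e0.
  have [t St] := sup_adherent e0 supS; rewrite -/s => est.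
  have ts : t <= s := sup_upper_bound supS St.
  have [/andP[t0 tL] Xpt] := St.
  exists (p t) => //; rewrite pd ?t0 // ger0_norm ?subr_ge0 //; lra.
(* times just after [s] are not in [S], so their points lie in [Y] *)
have Yps : Y (p s).
  have [->|sneL] := eqVneq s L; first by rewrite pL.
  have sltL : s < L by rewrite lt_neqAle sneL.
  apply: closed_near_set => // e e0.
  pose t := Num.min (s + e / 2) L.
  have st : s < t by rewrite lt_min sltL andbT; lra.
  have tI : 0 <= t <= L by rewrite ge_min lexx orbT andbT ltW ?(le_lt_trans s0 st).
  have notSt : ~ S t by move=> /(sup_upper_bound supS); rewrite leNgt st.
  have [Xpt|Ypt] := pXY t tI; first by case: (notSt (conj tI Xpt)).
  exists (p t) => //; rewrite pd // ltr0_norm ?subr_lt0 //.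
  have : t <= s + e / 2 by rewrite ge_min lexx.
  lra.
exists (p s) => //.
by rewrite -{1}p0 pd ?lexx ?L0 // sub0r normrN ger0_norm.
Qed.

Definition hop c z w := 4 * d z w < d c w.

Section pinched.
Variables (X Y : set Z) (c : Z) (δ : R).
Hypotheses (crossXY : crossing X Y) (meet_near_c : X `&` Y `<=` ball c (2 * δ)).

Lemma near_both_mdist_lt r s b :
  near_set r X b -> near_set s Y b -> d c b < 2 * r + s + 2 * δ.
Proof.
move=> [x Xx dbx] [y Yy dby].
have [v XYv dxv] := crossXY Xx Yy.
have := meet_near_c XYv; rewrite ballEmdist /= => dcv.
have := metric_triangle c v b; have := metric_triangle v x b.
have := metric_triangle x b y; rewrite (metric_sym v x) (metric_sym x b).
lra.
Qed.

Lemma near_set_hop K z w : K `<=` near_set δ (X `|` Y) -> K w ->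
  hop c z w -> 10 * δ <= d c w -> near_set δ X z -> near_set δ X w.
Proof.
move=> dense Kw hopzw far [x Xx dzx].
have [v [Xv|Yv] dwv] := dense w Kw; first by exists v.
(* otherwise [d c w < 2 d z w + 5 δ < d c w / 2 + 5 δ] *)
have Xw : near_set (d z w + δ) X w.
  by exists x => //; have := metric_triangle w z x; rewrite (metric_sym w z); lra.
have := near_both_mdist_lt Xw (ex_intro2 _ _ v Yv dwv).
rewrite /hop in hopzw; lra.
Qed.

End pinched.

Lemma hop_nbhs c z : z != c -> \forall w \near z, hop c z w /\ hop c w z.
Proof.
rewrite -mdist_gt0 metric_sym => dcz; apply/nbhs_ballP.
exists (d c z / 5); first by rewrite /= divr_gt0.
move=> w; rewrite ballEmdist /= => dzw.
have := metric_triangle c w z; have := metric_triangle c z w.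
rewrite /hop (metric_sym w z); lra.
Qed.

Lemma hop_chain_near K c a b :
  clos_refl_trans_n1 Z (fun z w => (K `\ c) w /\ hop c z w) a b ->
  exists2 r, 0 < r & forall X Y δ, 0 < δ -> δ <= r -> crossing X Y ->
    X `&` Y `<=` ball c (2 * δ) -> K `<=` near_set δ (X `|` Y) ->
    near_set δ X a -> near_set δ X b.
Proof.
elim=> [|z w [[Kw wc] hopzw] _ [r r0 near_z]]; first by exists 1.
have dcw : 0 < d c w by rewrite mdist_gt0 eq_sym; apply/eqP.
exists (Num.min r (d c w / 10)); first by rewrite lt_min r0 divr_gt0.
move=> X Y δ δ0; rewrite le_min => /andP[δr δw] crossXY meetXY dense Xa.
apply: (near_set_hop crossXY meetXY dense Kw hopzw); first lra.
exact: (near_z X Y δ).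
Qed.

Lemma hausdorff_dist_lt_nearl A B δ :
  (hausdorff_dist A B < δ%:E)%E -> A `<=` near_set δ B.
Proof.
rewrite /hausdorff_dist gt_max => /andP[+ _] a Aa.
move=> /(le_lt_trans (ereal_sup_ubound (ex_intro2 _ _ a Aa erefl))).
by move=> /ereal_inf_lt [_ [b Bb <-]]; rewrite lte_fin; exists b.
Qed.

Lemma hausdorff_dist_lt_nearr A B δ :
  (hausdorff_dist A B < δ%:E)%E -> B `<=` near_set δ A.
Proof.
rewrite /hausdorff_dist gt_max => /andP[_ +] b Bb.
move=> /(le_lt_trans (ereal_sup_ubound (ex_intro2 _ _ b Bb erefl))).
by move=> /ereal_inf_lt [_ [a Aa <-]]; rewrite lte_fin metric_sym; exists a.
Qed.

Lemma diam_ge0 A : (0 <= diam A)%E.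
Proof. by apply: ereal_sup_ubound; right. Qed.

Lemma mdist_le_diam A x y : A x -> A y -> ((d x y)%:E <= diam A)%E.
Proof. by move=> Ax Ay; apply: ereal_sup_ubound; left; exists (x, y). Qed.

Lemma diam_gt_mdist A e : 0 <= e -> (e%:E < diam A)%E ->
  exists x y, [/\ A x, A y & e < d x y].
Proof.
move=> e0 /ereal_sup_gt [_ [[[x y] [/= Ax Ay] <-]|->]]; last by rewrite lte_fin ltNge e0.
by rewrite lte_fin => exy; exists x, y.
Qed.

Lemma diam_gt_far A c e : 0 <= e -> (e%:E < diam A)%E ->
  exists2 a, A a & e / 2 < d c a.
Proof.
move=> e0 /(diam_gt_mdist e0) [x [y [Ax Ay exy]]].
have := metric_triangle x c y; rewrite (metric_sym x c).
have [cx|cx] := ltP (e / 2) (d c x); first by exists x.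
by exists y => //; lra.
Qed.

Definition split_triple X Y (e : R) : set (Z * Z * Z) :=
  [set t | [/\ X t.1.1, Y t.1.2, (X `&` Y) t.2, e < d t.2 t.1.1 & e < d t.2 t.1.2]].

Lemma split_triple_exists X Y e : 0 <= e -> crossing X Y ->
  (e%:E < diam X)%E -> (e%:E < diam Y)%E -> split_triple X Y (e / 2) !=set0.
Proof.
move=> e0 crossXY eX eY.
have [x [_ [Xx _ _]]] := diam_gt_mdist e0 eX.
have [y [_ [Yy _ _]]] := diam_gt_mdist e0 eY.
have [c XYc _] := crossXY x y Xx Yy.
have [a Xa eac] := diam_gt_far c e0 eX.
have [b Yb ebc] := diam_gt_far c e0 eY.
by exists (a, b, c).
Qed.

End metric.

Section cluster_point.
Context {R : numDomainType} {T : pseudoMetricType R}.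

Definition cluster_point (P : nat -> set T) (p : T) :=
  forall δ M, 0 < δ -> exists2 n, (M <= n)%N & (P n `&` ball p δ) !=set0.

Lemma compact_cluster_point (P : nat -> set T) : compact [set: T] ->
  (forall M, exists2 n, (M <= n)%N & P n !=set0) -> exists p, cluster_point P p.
Proof.
move=> cT often.
have witness M : exists t : nat * T, (M <= t.1)%N /\ P t.1 t.2.
  by have [n Mn [t Pt]] := often M; exists (n, t).
have [g gP] := choice witness.
have [p [_ clp]] := cT ((fun M => (g M).2) @ \oo) _ filterT.
exists p => δ M δ0.
have tail : ((fun M => (g M).2) @ \oo) [set (g M').2 | M' in [set M' | (M <= M')%N]].
  by exists M => // M' /= MM'; exists M'.
have [_ [[M' MM' <-] pgM']] := clp _ _ tail (nbhsx_ballx _ _ δ0).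
have [MgM' PgM'] := gP M'.
by exists (g M').1; [exact: leq_trans MM' MgM' | exists (g M').2].
Qed.

End cluster_point.

Section ereal_limits.
Context {R : realFieldType} {T : Type} {F : set_system T} {FF : Filter F}.

Lemma cvge0_ltr (u : T -> \bar R) δ :
  u @ F --> 0%E -> 0 < δ -> \forall t \near F, (u t < δ%:E)%E.
Proof. by move=> u0 δ0; apply: u0 _ (open_ereal_lt' _); rewrite lte_fin. Qed.

Lemma ge0_cvge0 (u : T -> \bar R) : (forall t, (0 <= u t)%E) ->
  (forall e, 0 < e -> \forall t \near F, (u t <= e%:E)%E) -> u @ F --> 0%E.
Proof.
move=> u0 u_small; apply/fine_cvgP; split.
  by apply: filterS (u_small 1 ltr01) => t; move: (u0 t); case: (u t).
apply/cvgrPdist_le => e e0; apply: filterS (u_small e e0) => t /=.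
move: (u0 t); case: (u t) => // r; rewrite !lee_fin => r0 re.
by rewrite sub0r normrN ger0_norm.
Qed.

End ereal_limits.

Section split_limit.
Context {R : realType} {Z : metricType R}.
Local Notation d := (@mdist R Z).
Variables (X Y : nat -> set Z) (K : set Z).
Hypotheses (clK : closed K) (twoK : two_connected K)
  (crossXY : forall n, crossing (X n) (Y n))
  (XYK : (fun n => hausdorff_dist (X n `|` Y n) K) @ \oo --> 0%E)
  (XY0 : (fun n => diam (X n `&` Y n)) @ \oo --> 0%E).

Lemma hausdorff_limit_mem p :
  (forall δ M, 0 < δ -> exists2 n, (M <= n)%N & near_set δ (X n `|` Y n) p) -> K p.
Proof.
move=> often; apply: closed_near_set clK _ => δ δ0.
have δ2 : 0 < δ / 2 by rewrite divr_gt0.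
have [M _ XYK_M] := cvge0_ltr XYK δ2.
have [n Mn [w XYw dpw]] := often _ M δ2.
have [z Kz dwz] := hausdorff_dist_lt_nearl (XYK_M n Mn) XYw.
by exists z => //; have := metric_triangle p w z; lra.
Qed.

Lemma split_cluster_mem e p : 0 < e ->
  cluster_point (fun n => split_triple (X n) (Y n) e) p ->
  [/\ K p.2, (K `\ p.2) p.1.1 & (K `\ p.2) p.1.2].
Proof.
case: p => [[a b] c] /= e0 clp.
have near_abc δ M : 0 < δ -> exists2 n, (M <= n)%N & [/\ near_set δ (X n `|` Y n) a,
    near_set δ (X n `|` Y n) b & near_set δ (X n `|` Y n) c].
  move=> δ0; have [n Mn [[[a' b'] c'] [[Xa' Yb' [Xc' _] _ _] [[aa' bb'] cc']]]] := clp δ M δ0.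
  move: aa' bb' cc'; rewrite !ballEmdist /= => aa' bb' cc'.
  by exists n => //; split; [exists a'; [left|] | exists b'; [right|] | exists c'; [left|]].
have [Ka Kb Kc] : [/\ K a, K b & K c].
  by split; apply: hausdorff_limit_mem => δ M /(near_abc δ M) [n Mn [? ? ?]]; exists n.
have e4 : 0 < e / 4 by rewrite divr_gt0.
have [n _ [[[a' b'] c'] [[_ _ _ ea'c' eb'c'] [[aa' bb'] cc']]]] := clp _ 0%N e4.
move: aa' bb' cc'; rewrite !ballEmdist /= => aa' bb' cc'.
have := metric_triangle c' c a'; have := metric_triangle c a a'.
have := metric_triangle c' c b'; have := metric_triangle c b b'.
rewrite (metric_sym c' c) => ? ? ? ?.
have [ca cb] : 0 < d c a /\ 0 < d c b by split; lra.
split => //; split => // /= xc; [move: ca | move: cb]; by rewrite xc mdistxx ltxx.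
Qed.

Lemma no_split_cluster e p : 0 < e ->
  ~ cluster_point (fun n => split_triple (X n) (Y n) e) p.
Proof.
move=> e0 clp; have [Kc Ka Kb] := split_cluster_mem e0 clp.
move: p clp Kc Ka Kb => [[a b] c] /= clp Kc Ka Kb.
have hop_near z : (K `\ c) z -> \forall w \near z, hop c z w /\ hop c w z.
  by move=> [_ /eqP zc]; exact: hop_nbhs.
have [r r0 near_ab] := hop_chain_near (connected_chain (twoK Kc) Ka hop_near Kb).
have dcb : 0 < d c b by rewrite mdist_gt0 eq_sym; case: Kb => _ /eqP.
pose δ := Num.min r (d c b / 10).
have δ0 : 0 < δ by rewrite lt_min r0 divr_gt0.
have [M _ small_M] := filterI (cvge0_ltr XYK δ0) (cvge0_ltr XY0 δ0).
have [n Mn [[[a' b'] c'] [[Xa' Yb' XYc' _ _] [[aa' bb'] cc']]]] := clp δ M δ0.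
move: aa' bb' cc'; rewrite !ballEmdist /= => aa' bb' cc'.
have [XYK_n XY0_n] := small_M n Mn.
have meet : X n `&` Y n `<=` ball c (2 * δ).
  move=> w XYw; rewrite ballEmdist /=.
  have := le_lt_trans (mdist_le_diam XYc' XYw) XY0_n; rewrite lte_fin.
  have := metric_triangle c c' w; lra.
have Xb : near_set δ (X n) b.
  apply: (near_ab _ _ _ δ0 _ (@crossXY n) meet (hausdorff_dist_lt_nearr XYK_n)).
    by rewrite ge_min lexx.
  by exists a'.
have := near_both_mdist_lt (@crossXY n) meet Xb (ex_intro2 _ _ b' Yb' bb').
have : δ <= d c b / 10 by rewrite ge_min lexx orbT.
lra.
Qed.

End split_limit.

Theorem lemma5p5 (R : realType) (Z : metricType R)
    (X Y : nat -> set Z) (Zinf : set Z) :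
  compact [set: Z] ->
  (forall n, compact (X n)) -> (forall n, compact (Y n)) ->
  compact Zinf ->
  (fun n => hausdorff_dist (X n `|` Y n) Zinf) @ \oo --> 0%E ->
  (forall n, geodesic_set (X n `|` Y n)) ->
  two_connected Zinf ->
  (fun n => diam (X n `&` Y n)) @ \oo --> 0%E ->
  (fun n => mine (diam (X n)) (diam (Y n))) @ \oo --> 0%E.
Proof.
move=> cZ cX cY cK XYK geo twoK XY0.
have clos (A : set Z) : compact A -> closed A := compact_closed (@metric_hausdorff _ _).
have crossXY n : crossing (X n) (Y n).
  exact: geodesic_crossing (geo n) (clos _ (cX n)) (clos _ (cY n)).
apply: ge0_cvge0 => [n|e e0]; first by rewrite le_min !diam_ge0.
apply: contrapT => not_small.
have split_often M : exists2 n, (M <= n)%N & split_triple (X n) (Y n) (e / 2) !=set0.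
  have [n Mn] : exists2 n, (M <= n)%N & (e%:E < mine (diam (X n)) (diam (Y n)))%E.
    apply: contrapT => none; apply: not_small; exists M => // n /= Mn.
    by rewrite leNgt; apply/negP => big; apply: none; exists n.
  rewrite lt_min => /andP[eX eY]; exists n => //.
  exact: split_triple_exists (ltW e0) (crossXY n) eX eY.
have cZ3 : compact [set: Z * Z * Z].
  by rewrite -!setXTT; apply: compact_setX => //; apply: compact_setX.
have [p clp] := compact_cluster_point cZ3 split_often.
by apply: no_split_cluster (clos _ cK) twoK crossXY XYK XY0 _ p _ clp; rewrite divr_gt0.
Qed.
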